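(* Let $M\in\mathbb{R}_+^{m\times n}$ be a matrix with nonnegative entries and let $k\ge 1$ be an integer. Consider the problem $$\min_{U\in\mathbb{R}_+^{m\times k},\,V\in\mathbb{R}_+^{n\times k}}\ \left\|M-UV^\top\right\|_F .$$ If an optimal solution to this problem exists, then there exists at least one global optimal solution $(U,V)$ satisfying $$U_{i,l}\le \sqrt{2\|M\|_F}\quad\text{and}\quad V_{j,l}\le\sqrt{2\|M\|_F}\qquad\text{for all } i\in\{1,\dots,m\},\ j\in\{1,\dots,n\},\ l\in\{1,\dots,k\}.$$
   Context: $\mathbb{R}_+^{p\times q}$ denotes the set of $p\times q$ real matrices with nonnegative entries; $\|X\|_F=(\sum_{ij}X_{ij}^2)^{1/2}$ is the Frobenius norm; $U_{i,l}$ denotes the $(i,l)$ entry of $U$. *)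

From HB Require Import structures.
From mathcomp Require Import all_boot all_order all_algebra.
From mathcomp Require Import reals.
Set Implicit Arguments. Unset Strict Implicit. Unset Printing Implicit Defensive.
Import Order.TTheory GRing.Theory Num.Theory.
Local Open Scope ring_scope.

Definition frob (R : realType) (p q : nat) (X : 'M[R]_(p, q)) : R :=
  Num.sqrt (\sum_(i < p) \sum_(j < q) X i j ^+ 2).

Definition nonneg_mx (R : realType) (p q : nat) (X : 'M[R]_(p, q)) : Prop :=
  forall i j, 0 <= X i j.

Definition nmf_obj (R : realType) (m n k : nat) (M : 'M[R]_(m, n))
  (U : 'M[R]_(m, k)) (V : 'M[R]_(n, k)) : R :=
  frob (M - U *m V^T).

Definition nmf_optimal (R : realType) (m n k : nat) (M : 'M[R]_(m, n))
  (U : 'M[R]_(m, k)) (V : 'M[R]_(n, k)) : Prop :=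
  nonneg_mx U /\ nonneg_mx V /\
  forall (U' : 'M[R]_(m, k)) (V' : 'M[R]_(n, k)),
    nonneg_mx U' -> nonneg_mx V' -> nmf_obj M U V <= nmf_obj M U' V'.

From HB Require Import structures.
From mathcomp Require Import all_boot all_order all_algebra.
From mathcomp Require Import reals.
From mathcomp Require Import ring lra.
Import Order.TTheory GRing.Theory Num.Theory.
Local Open Scope ring_scope.

(* The objective only depends on the product U V^T, so any optimal pair may
   be rebalanced column by column: scaling column l of U by s > 0 and column l
   of V by 1/s keeps it optimal.  Choosing s so that both columns get the same
   maximal entry makes that entry sqrt (a_l b_l), where a_l, b_l are the column
   maxima.  Since all terms of (U V^T)_ij are nonnegative, a_l b_l is at most
   the largest entry of U V^T, and comparing the optimum with (0, 0) bounds
   the entries of U V^T by 2 ||M||_F. *)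

Lemma bigmax_mul_le {R : realDomainType} {I J : finType}
    (f : I -> R) (g : J -> R) (c : R) :
  0 <= c -> (forall i j, f i * g j <= c) ->
  \big[Order.max/0]_i f i * \big[Order.max/0]_j g j <= c.
Proof.
move=> c_ge0 fg_le.
have max_closed (P : pred R) x y : P x -> P y -> P (Order.max x y).
  by rewrite /Order.max; case: ifP.
apply: (big_ind (fun x => x * _ <= c)) => [|x y|i _]; first by rewrite mul0r.
  exact: (max_closed (fun x => x * _ <= c)).
apply: (big_ind (fun y => f i * y <= c)) => [|x y|j _]; first by rewrite mulr0.
  exact: (max_closed (fun y => f i * y <= c)).
exact: fg_le.
Qed.

Section Balance.
Context {R : rcfType}.
Implicit Types a b x y : R.

Definition balance a b := Num.sqrt b / Num.sqrt a.

Lemma balance_ge0 a b : 0 <= balance a b.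
Proof. by rewrite divr_ge0 ?sqrtr_ge0. Qed.

Lemma mul_balance_le x a b :
  0 <= x <= a -> 0 <= b -> x * balance a b <= Num.sqrt (a * b).
Proof.
case/andP=> x_ge0 x_le_a b_ge0; have a_ge0 := le_trans x_ge0 x_le_a.
have [a0|a_neq0] := eqVneq a 0.
  by rewrite a0 /balance sqrtr0 invr0 !mulr0 sqrtr_ge0.
have sa_neq0 : Num.sqrt a != 0 by rewrite sqrtr_eq0 -ltNge lt0r a_neq0.
have -> : Num.sqrt (a * b) = a * balance a b.
  by rewrite /balance sqrtrM // -{2}(sqr_sqrtr a_ge0); field.
by rewrite ler_wpM2r ?balance_ge0.
Qed.

(* If a or b is 0 then so is x or y, and balance a b = balance b a = 0
   because x / 0 = 0. *)
Lemma mul_balance_swap x y a b :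
  0 <= x <= a -> 0 <= y <= b ->
  x * balance a b * (y * balance b a) = x * y.
Proof.
case/andP=> x_ge0 x_le_a /andP[y_ge0 y_le_b].
have [a0|a_neq0] := eqVneq a 0.
  have -> : x = 0 by apply/le_anti; rewrite x_ge0 -a0 x_le_a.
  by rewrite !mul0r.
have [b0|b_neq0] := eqVneq b 0.
  have -> : y = 0 by apply/le_anti; rewrite y_ge0 -b0 y_le_b.
  by rewrite !(mul0r, mulr0).
have sa_neq0 : Num.sqrt a != 0.
  by rewrite sqrtr_eq0 -ltNge lt0r a_neq0 (le_trans x_ge0).
have sb_neq0 : Num.sqrt b != 0.
  by rewrite sqrtr_eq0 -ltNge lt0r b_neq0 (le_trans y_ge0).
by rewrite /balance; field; rewrite sa_neq0 sb_neq0.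
Qed.

End Balance.

Definition colmax {R : realDomainType} {p q : nat} (X : 'M[R]_(p, q))
    (l : 'I_q) : R :=
  \big[Order.max/0]_(i < p) X i l.

Lemma le_colmax {R : realDomainType} {p q : nat} (X : 'M[R]_(p, q)) i l :
  X i l <= colmax X l.
Proof. exact: (le_bigmax 0 (fun i => X i l)). Qed.

Lemma colmax_ge0 {R : realDomainType} {p q : nat} (X : 'M[R]_(p, q)) l :
  0 <= colmax X l.
Proof. exact: bigmax_ge_id. Qed.

Definition balanced_left {R : realType} {m n k : nat}
    (U : 'M[R]_(m, k)) (V : 'M[R]_(n, k)) : 'M[R]_(m, k) :=
  \matrix_(i, l) (U i l * balance (colmax U l) (colmax V l)).

Definition balanced_right {R : realType} {m n k : nat}
    (U : 'M[R]_(m, k)) (V : 'M[R]_(n, k)) : 'M[R]_(n, k) :=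
  \matrix_(j, l) (V j l * balance (colmax V l) (colmax U l)).

Section BalancedFactors.
Context {R : realType} {m n k : nat} {U : 'M[R]_(m, k)} {V : 'M[R]_(n, k)}.
Hypotheses (U_ge0 : nonneg_mx U) (V_ge0 : nonneg_mx V).

Lemma nonneg_balanced_left : nonneg_mx (balanced_left U V).
Proof. by move=> i l; rewrite mxE mulr_ge0 ?balance_ge0. Qed.

Lemma nonneg_balanced_right : nonneg_mx (balanced_right U V).
Proof. by move=> j l; rewrite mxE mulr_ge0 ?balance_ge0. Qed.

Lemma balanced_mul_tr : balanced_left U V *m (balanced_right U V)^T = U *m V^T.
Proof.
apply/matrixP=> i j; rewrite !mxE; apply: eq_bigr => l _.
by rewrite !mxE mul_balance_swap ?U_ge0 ?V_ge0 ?le_colmax.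
Qed.

Lemma balanced_left_le i l :
  balanced_left U V i l <= Num.sqrt (colmax U l * colmax V l).
Proof. by rewrite mxE mul_balance_le ?U_ge0 ?le_colmax ?colmax_ge0. Qed.

Lemma balanced_right_le j l :
  balanced_right U V j l <= Num.sqrt (colmax U l * colmax V l).
Proof.
rewrite mxE [colmax U l * _]mulrC.
by rewrite mul_balance_le ?V_ge0 ?le_colmax ?colmax_ge0.
Qed.

End BalancedFactors.

Section Optimality.
Context {R : realType} {m n k : nat} {M : 'M[R]_(m, n)}.

Lemma nonneg_mx0 (p q : nat) : nonneg_mx (0 : 'M[R]_(p, q)).
Proof. by move=> i j; rewrite mxE. Qed.

Lemma entry_le_frob {p q : nat} (X : 'M[R]_(p, q)) i j : `|X i j| <= frob X.
Proof.
rewrite /frob -sqrtr_sqr ler_wsqrtr // (bigD1 i) //= (bigD1 j) //=.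
rewrite -addrA lerDl addr_ge0 ?sumr_ge0 // => *; first exact: sqr_ge0.
by rewrite sumr_ge0 // => *; exact: sqr_ge0.
Qed.

Lemma mul_le_mulmx_tr {U : 'M[R]_(m, k)} {V : 'M[R]_(n, k)} :
  nonneg_mx U -> nonneg_mx V -> forall i j l, U i l * V j l <= (U *m V^T) i j.
Proof.
move=> U_ge0 V_ge0 i j l; rewrite mxE (bigD1 l) //= mxE lerDl.
by rewrite sumr_ge0 // => l' _; rewrite mxE mulr_ge0.
Qed.

Lemma nmf_optimal_mulmx_le {U : 'M[R]_(m, k)} {V : 'M[R]_(n, k)} :
  nmf_optimal M U V -> forall i j, (U *m V^T) i j <= 2 * frob M.
Proof.
move=> [_ [_ opt]] i j; set W := U *m V^T.
have le_obj0 : frob (M - W) <= frob M.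
  have := opt 0 0 (nonneg_mx0 _ _) (nonneg_mx0 _ _).
  by rewrite /nmf_obj mul0mx subr0.
have := le_trans (entry_le_frob (M - W) i j) le_obj0.
rewrite [(M - W) i j]mxE [(- W) i j]mxE ler_norml => /andP[+ _].
have := le_trans (ler_norm (M i j)) (entry_le_frob M i j).
lra.
Qed.

Lemma nmf_optimal_mulmx_eq {U U' : 'M[R]_(m, k)} {V V' : 'M[R]_(n, k)} :
  nmf_optimal M U V -> nonneg_mx U' -> nonneg_mx V' ->
  U' *m V'^T = U *m V^T -> nmf_optimal M U' V'.
Proof.
by move=> [_ [_ opt]] U'_ge0 V'_ge0 eqUV; rewrite /nmf_optimal /nmf_obj eqUV.
Qed.

End Optimality.

Theorem lemma1 (R : realType) (m n k : nat) (M : 'M[R]_(m, n)) :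
  nonneg_mx M -> (1 <= k)%N ->
  (exists (U0 : 'M[R]_(m, k)) (V0 : 'M[R]_(n, k)), nmf_optimal M U0 V0) ->
  exists (U : 'M[R]_(m, k)) (V : 'M[R]_(n, k)),
    nmf_optimal M U V /\
    (forall i l, U i l <= Num.sqrt (2 * frob M)) /\
    (forall j l, V j l <= Num.sqrt (2 * frob M)).
Proof.
move=> _ _ [U [V opt]]; have [U_ge0 [V_ge0 _]] := opt.
have colmax_bound l :
    Num.sqrt (colmax U l * colmax V l) <= Num.sqrt (2 * frob M).
  rewrite ler_wsqrtr // bigmax_mul_le ?mulr_ge0 ?sqrtr_ge0 // => i j.
  exact: le_trans (mul_le_mulmx_tr U_ge0 V_ge0 i j l)
                  (nmf_optimal_mulmx_le opt i j).
exists (balanced_left U V), (balanced_right U V); split; [|split].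
- apply: nmf_optimal_mulmx_eq opt _ _ (balanced_mul_tr U_ge0 V_ge0).
    exact: nonneg_balanced_left U_ge0.
  exact: nonneg_balanced_right V_ge0.
- move=> i l; exact: le_trans (balanced_left_le U_ge0 i l) (colmax_bound l).
- move=> j l; exact: le_trans (balanced_right_le V_ge0 j l) (colmax_bound l).
Qed.
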